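(* Let $\mathcal{H}$ be a hypergraph. Then $\mathcal{H}$ is a hypertree if and only if $Comp(\mathcal{H})$ is a hypertree. Moreover, $\mathcal{H}$ is a hypertree if and only if $\mathcal{B}(Comp(\mathcal{H}))$ is a hypertree.
   Context: A hypergraph $\mathcal{H}$ has a finite vertex set $V(\mathcal{H})$ and a finite family $E(\mathcal{H})$ (repetitions allowed) of nonempty subsets of $V(\mathcal{H})$ (edges). A host tree of $\mathcal{H}$ is a tree with vertex set $V(\mathcal{H})$ in which every edge of $\mathcal{H}$ induces a connected subgraph; $\mathcal{H}$ is a hypertree if it has a host tree. A union $\bigcup_{i=1}^n F_i$ is connected if the intersection graph of the sets $F_1,\dots,F_n$ is connected. The completion $Comp(\mathcal{H})$ is the hypergraph without repeated edges on vertex set $V(\mathcal{H})$ whose edges are $V(\mathcal{H})$, all one-element subsets of $V(\mathcal{H})$, and all proper subsets of $V(\mathcal{H})$ obtainable from edges of $\mathcal{H}$ by applying (in any order and amount) nonempty intersections and connected unions. For a hypergraph $\mathcal{K}$ whose edge set is closed under connected unions, its basis $\mathcal{B}(\mathcal{K})$ is the hypergraph without repeated edges on $V(\mathcal{K})$ whose edges are the edges of $\mathcal{K}$ with more than one vertex that cannot be expressed as a connected union of strictly smaller edges of $\mathcal{K}$. *)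

From mathcomp Require Import all_boot.
Set Implicit Arguments. Unset Strict Implicit. Unset Printing Implicit Defensive.

(* A hypergraph on the finite vertex set T is a family of nonempty subsets
   of T; a "hypergraph without repeated edges" is represented by a predicate
   on {set T}, a hypergraph with repetitions by a sequence of sets. *)

Section Hyper.
Variable T : finType.

Definition cycle_in (e : rel T) (c : seq T) : Prop :=
  [/\ uniq c, 3 <= size c & cycle e c].

Definition is_tree (e : rel T) : Prop :=
  [/\ symmetric e, irreflexive e,
      (forall x y : T, connect e x y) &
      (forall c : seq T, ~ cycle_in e c)].

Definition induced (e : rel T) (F : {set T}) : rel T :=
  [rel x y | [&& x \in F, y \in F & e x y]].

Definition induces_connected (e : rel T) (F : {set T}) : Prop :=
  forall x y, x \in F -> y \in F -> connect (induced e F) x y.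

Definition host_tree (P : {set T} -> Prop) (e : rel T) : Prop :=
  is_tree e /\ forall F, P F -> induces_connected e F.

Definition hypertree (P : {set T} -> Prop) : Prop := exists e, host_tree P e.

Definition edges_of (E : seq {set T}) : {set T} -> Prop := fun F => F \in E.

Definition intersection_connected (s : seq {set T}) : Prop :=
  forall i j : 'I_(size s),
    connect [rel a b : 'I_(size s) | nth set0 s a :&: nth set0 s b != set0] i j.

Inductive obtainable (E : seq {set T}) : {set T} -> Prop :=
| obt_edge F : F \in E -> obtainable E F
| obt_inter (s : seq {set T}) :
    0 < size s -> (forall F, F \in s -> obtainable E F) ->
    \bigcap_(F <- s) F != set0 -> obtainable E (\bigcap_(F <- s) F)
| obt_union (s : seq {set T}) :
    0 < size s -> (forall F, F \in s -> obtainable E F) ->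
    intersection_connected s -> obtainable E (\bigcup_(F <- s) F).

Definition Comp (E : seq {set T}) : {set T} -> Prop := fun A =>
  A = setT \/ #|A| = 1 \/ (A != setT /\ obtainable E A).

Definition basis (K : {set T} -> Prop) : {set T} -> Prop := fun A =>
  [/\ K A, 1 < #|A| &
      ~ exists s : seq {set T},
          [/\ 0 < size s, (forall F, F \in s -> K F /\ F \proper A),
              intersection_connected s & \bigcup_(F <- s) F = A]].

End Hyper.

From mathcomp Require Import all_boot.
From Stdlib Require Import Classical.
Set Implicit Arguments. Unset Strict Implicit. Unset Printing Implicit Defensive.

(* Fix a host tree [e] of H.  The sets inducing connected subgraphs of a tree
   are closed under nonempty intersections (a simple path of a tree between
   two points of a connected set [B] stays inside [B], otherwise deleting its
   first edge leaving [B] would not disconnect the tree) and under connected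
   unions, and singletons and [setT] are trivially connected; hence every edge
   of Comp(H) is connected in [e].  Conversely a host tree of Comp(H) is one of
   H, as H's edges are edges of Comp(H).  For the basis, every edge of Comp(H)
   with at least two vertices that is not a basis edge is a connected union of
   strictly smaller edges of Comp(H), so induction on the cardinality shows that
   a host tree of the basis is a host tree of Comp(H). *)

Section TreeConnectivity.
Variable T : finType.
Implicit Types (e : rel T) (A B F : {set T}) (s : seq {set T}).

Definition remove_edge e u v : rel T :=
  [rel a b | e a b && ~~ ((a == u) && (b == v) || (a == v) && (b == u))].

Lemma remove_edge_sym e u v : symmetric e -> symmetric (remove_edge e u v).
Proof.
move=> e_sym a b; rewrite /remove_edge /= e_sym orbC.
by rewrite (andbC (a == v)) (andbC (a == u)).
Qed.

Lemma tree_remove_edge_disconnect e u v :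
  is_tree e -> e u v -> ~ connect (remove_edge e u v) u v.
Proof.
case=> e_sym e_irr _ acyclic euv /connectP [p pp vE].
case: (shortenP pp) vE => {pp}p pp p_uniq _ vE.
case: p pp p_uniq vE => [|w [|z q]] /=.
- by move=> _ _ vu; rewrite vu e_irr in euv.
- by move=> + _ vw; rewrite -vw /remove_edge /= !eqxx andbF.
move=> pp p_uniq vE; apply: (acyclic (u :: w :: z :: q)); split => //.
rewrite /cycle rcons_path; apply/andP; split.
  by apply: (@sub_path _ (remove_edge e u v)) => // a b /andP [].
by rewrite /= -vE e_sym.
Qed.

Lemma connect_induced_sub e A B x y : A \subset B ->
  connect (induced e A) x y -> connect (induced e B) x y.
Proof.
move=> sAB; apply: connect_sub => a b /and3P [aA bA eab].
by apply: connect1; rewrite /induced /= (subsetP sAB _ aA) (subsetP sAB _ bA).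
Qed.

Lemma tree_uniq_path_sub e B x p :
  is_tree e -> induces_connected e B -> path e x p -> uniq (x :: p) ->
  x \in B -> last x p \in B -> all (mem B) (x :: p).
Proof.
move=> e_tree B_conn; elim: p x => [|a p IH] x /=; first by rewrite andbT.
case/andP=> exa pp /andP []; rewrite inE negb_or => /andP [xa x_p] p_uniq xB lB.
have [aB|aNB] := boolP (a \in B).
  by move: (IH a pp p_uniq aB lB) => /= /andP [_ ->]; rewrite xB.
exfalso; apply: (tree_remove_edge_disconnect e_tree exa).
have x_last : connect (remove_edge e x a) x (last a p).
  apply: connect_sub (B_conn _ _ xB lB) => b c /and3P [bB cB ebc].
  apply: connect1; rewrite /remove_edge /= ebc.
  by rewrite (negbTE (memPn aNB b bB)) (negbTE (memPn aNB c cB)) !andbF.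
have a_last : connect (remove_edge e x a) a (last a p).
  apply/connectP; exists p => //; apply: (sub_in_path (P := predC1 x)) pp.
    move=> b c /= bx cx ebc; rewrite /remove_edge /= ebc.
    by rewrite (negbTE bx) (negbTE cx) !andbF.
  by rewrite /= eq_sym xa; apply/allP => z zp /=; apply: contraNneq x_p => <-.
case: e_tree => e_sym _ _ _.
apply: connect_trans x_last _.
by rewrite (sym_connect_sym (remove_edge_sym x a e_sym)).
Qed.

Lemma induces_connectedI e A B : is_tree e ->
  induces_connected e A -> induces_connected e B ->
  induces_connected e (A :&: B).
Proof.
move=> e_tree A_conn B_conn x y; rewrite !inE => /andP [xA xB] /andP [yA yB].
case/connectP: (A_conn _ _ xA yA) => p pp yE.
case: (shortenP pp) yE => {pp}p pp p_uniq _ yE; rewrite yE in yA yB *.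
have pe : path e x p by apply: (@sub_path _ (induced e A)) pp => a b /and3P [].
have pA := tree_uniq_path_sub e_tree A_conn pe p_uniq xA yA.
have pB := tree_uniq_path_sub e_tree B_conn pe p_uniq xB yB.
apply/connectP; exists p => //.
apply: (sub_in_path (P := mem (A :&: B))) pp.
  by move=> b c /= bAB cAB /and3P [_ _ ebc]; rewrite /induced /= bAB cAB.
apply/allP => z zp; apply/setIP.
by split; [apply: (allP pA) | apply: (allP pB)].
Qed.

Lemma induces_connected_setT e : is_tree e -> induces_connected e setT.
Proof.
case=> _ _ e_conn _ x y _ _; apply: connect_sub (e_conn x y) => a b eab.
by apply: connect1; rewrite /induced /= !inE.
Qed.

Lemma induces_connected_bigcap e s : is_tree e ->
  (forall F, F \in s -> induces_connected e F) ->
  induces_connected e (\bigcap_(F <- s) F).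
Proof.
move=> e_tree; elim: s => [|F s IH] s_conn.
  by rewrite big_nil; apply: induces_connected_setT.
rewrite big_cons; apply: induces_connectedI => //.
  by apply: s_conn; rewrite mem_head.
by apply: IH => G Gs; apply: s_conn; rewrite inE Gs orbT.
Qed.

Lemma induces_connected_bigcup e s :
  (forall F, F \in s -> induces_connected e F) -> intersection_connected s ->
  induces_connected e (\bigcup_(F <- s) F).
Proof.
move=> s_conn s_ic x y; rewrite bigcup_seq.
move=> /bigcupP [Fx Fxs xFx] /bigcupP [Fy Fys yFy].
set U := \bigcup_(F in s) F; set C := [set z | connect (induced e U) x z].
have conn_in F a b : F \in s -> a \in F -> b \in F -> connect (induced e U) a b.
  move=> Fs aF bF; apply: connect_induced_sub (s_conn F Fs a b aF bF).
  exact: bigcup_sup.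
have C_step (i j : 'I_(size s)) : nth set0 s i :&: nth set0 s j != set0 ->
    nth set0 s i \subset C -> nth set0 s j \subset C.
  case/set0Pn=> w; rewrite inE => /andP [wi wj] /subsetP iC.
  apply/subsetP => z zj; move: (iC w wi); rewrite !inE => xw.
  by apply: connect_trans xw (conn_in _ _ _ (mem_nth _ _) wj zj).
have ix : index Fx s < size s by rewrite index_mem.
have iy : index Fy s < size s by rewrite index_mem.
have FxC : nth set0 s (Ordinal ix) \subset C.
  by apply/subsetP => z; rewrite /= nth_index // inE; apply: conn_in.
case/connectP: (s_ic (Ordinal ix) (Ordinal iy)) => p pp lE.
have : nth set0 s (last (Ordinal ix) p) \subset C.
  elim: p (Ordinal ix) pp FxC {lE} => [|j p IH] i //= /andP [ij pp] iC.
  exact: IH pp (C_step i j ij iC).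
by rewrite -lE /= nth_index // => /subsetP/(_ y yFy); rewrite inE.
Qed.

End TreeConnectivity.

Section Completion.
Variable T : finType.
Implicit Types (e : rel T) (A F : {set T}) (E : seq {set T}).
Implicit Types (P Q K : {set T} -> Prop).

Lemma induces_connected_card_le1 e A : #|A| <= 1 -> induces_connected e A.
Proof. by move=> /card_le1_eqP A_le1 x y xA yA; rewrite (A_le1 x y xA yA). Qed.

Lemma host_tree_sub P Q e :
  (forall F, P F -> Q F) -> host_tree Q e -> host_tree P e.
Proof. by move=> sPQ [e_tree Q_conn]; split=> // F /sPQ/Q_conn. Qed.

Lemma hypertree_sub P Q : (forall F, P F -> Q F) -> hypertree Q -> hypertree P.
Proof. by move=> sPQ [e /(host_tree_sub sPQ) e_host]; exists e. Qed.

Lemma Comp_edges_of E F : edges_of E F -> Comp E F.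
Proof.
move=> FE; have [->|F_neqT] := eqVneq F setT; first by left.
by right; right; split=> //; apply: obt_edge.
Qed.

Lemma obtainable_induces_connected e E A : is_tree e ->
  (forall F, F \in E -> induces_connected e F) ->
  obtainable E A -> induces_connected e A.
Proof.
move=> e_tree E_conn; elim=> [F /E_conn //|s _ _ s_conn _|s _ _ s_conn s_ic].
- exact: induces_connected_bigcap.
- exact: induces_connected_bigcup.
Qed.

Lemma host_tree_Comp E e : host_tree (edges_of E) e -> host_tree (Comp E) e.
Proof.
case=> e_tree E_conn; split=> // A [->|[A1|[_ A_obt]]].
- exact: induces_connected_setT.
- by apply: induces_connected_card_le1; rewrite A1.
- exact: obtainable_induces_connected A_obt.
Qed.

Lemma induces_connected_of_basis K e A :
  (forall F, basis K F -> induces_connected e F) ->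
  K A -> induces_connected e A.
Proof.
move=> basis_conn; have [n] := ubnP #|A|; elim: n A => // n IH A A_lt KA.
have [A_le1|A_gt1] := leqP #|A| 1; first exact: induces_connected_card_le1.
have [A_basis|A_nbasis] := classic (basis K A); first exact: basis_conn.
have [s [_ s_sub s_ic <-]] : exists s : seq {set T},
    [/\ 0 < size s, (forall F, F \in s -> K F /\ F \proper A),
        intersection_connected s & \bigcup_(F <- s) F = A].
  by apply: NNPP => no_split; apply: A_nbasis.
apply: induces_connected_bigcup s_ic => F /s_sub [KF FA]; apply: IH KF.
exact: leq_trans (proper_card FA) _.
Qed.

Lemma host_tree_of_basis K e : host_tree (basis K) e -> host_tree K e.
Proof.
by case=> e_tree basis_conn; split=> // A; apply: induces_connected_of_basis.
Qed.

End Completion.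

Theorem mainTheorem2 (T : finType) (E : seq {set T}) :
  0 < #|T| ->
  (forall F, F \in E -> F != set0) ->
  (hypertree (edges_of E) <-> hypertree (Comp E)) /\
  (hypertree (edges_of E) <-> hypertree (basis (Comp E))).
Proof.
(* Empty edges are vacuously connected. *)
move=> _ _.
have Comp_of_edges_of : hypertree (edges_of E) -> hypertree (Comp E).
  by case=> e /host_tree_Comp; exists e.
have edges_of_of_Comp : hypertree (Comp E) -> hypertree (edges_of E).
  exact/hypertree_sub/Comp_edges_of.
split; split=> // [/Comp_of_edges_of|].
- by apply: hypertree_sub => F [].
- by case=> e /host_tree_of_basis e_host; apply: edges_of_of_Comp; exists e.
Qed.
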